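(* Let $(G,H)$ be a discrete Hecke pair which has a finite generating set $S$. If $(G,H)$ is of subexponential growth (with respect to a length function $l$ on $(G,H)$), then $(G,H)$ is relatively unimodular, i.e. $L(g)=R(g)$ for all $g\in G$.
   Context: A discrete Hecke pair is a group $G$ with a subgroup $H$ such that $L(x):=[H:H\cap xHx^{-1}]<\infty$ for all $x$; $R(x):=L(x^{-1})$; relatively unimodular means $L(g)/R(g)=1$ for all $g$. $S\subseteq G$ generates $(G,H)$ if $H\backslash G=\bigcup_nH\hat S^n$, $\hat S=S\cup S^{-1}\cup\{e\}$. A length function on $(G,H)$ is $l:G\to[0,\infty)$ with $l(e)=0$, $l(g)=l(g^{-1})$, $l(gh)\le l(g)+l(h)$ and $l|_H=0$; its growth function is $\mathcal G_l(r)=\#\{Hx\in H\backslash G: l(x)\le r\}$, and $(G,H)$ has subexponential growth with respect to $l$ if $\mathcal G_l(r)<\infty$ for all $r$ and $\lim_{r\to\infty}\frac{\ln\mathcal G_l(r)}{r}=0$. *)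

From Stdlib Require Import Reals List.
From Coquelicot Require Import Coquelicot.
Open Scope R_scope.

Record group := Group {
  carrier :> Type;
  gmul : carrier -> carrier -> carrier;
  ginv : carrier -> carrier;
  gone : carrier;
  gmulA : forall x y z, gmul x (gmul y z) = gmul (gmul x y) z;
  gmul1l : forall x, gmul gone x = x;
  gmulVl : forall x, gmul (ginv x) x = gone
}.

Arguments gmul {g}. Arguments ginv {g}. Arguments gone {g}.

Definition is_subgroup (G : group) (H : G -> Prop) : Prop :=
  H gone /\ (forall x y, H x -> H y -> H (gmul x y)) /\ (forall x, H x -> H (ginv x)).

(* The subgroup H ∩ x H x^{-1} = { h | h ∈ H and x^{-1} h x ∈ H } *)
Definition conj_cap (G : group) (H : G -> Prop) (x : G) : G -> Prop :=
  fun h => H h /\ H (gmul (ginv x) (gmul h x)).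

(* [H : K] = n : there are exactly n left cosets of K in H, i.e. a family of n
   elements of H such that every h ∈ H lies in exactly one coset f_i K. *)
Definition has_index (G : group) (H K : G -> Prop) (n : nat) : Prop :=
  exists f : nat -> G,
    (forall i, (i < n)%nat -> H (f i)) /\
    (forall h, H h -> exists i, (i < n)%nat /\ K (gmul (ginv (f i)) h) /\
        forall j, (j < n)%nat -> K (gmul (ginv (f j)) h) -> j = i).

Definition L_is (G : group) (H : G -> Prop) (x : G) (n : nat) : Prop :=
  has_index G H (conj_cap G H x) n.

Definition R_is (G : group) (H : G -> Prop) (x : G) (n : nat) : Prop :=
  L_is G H (ginv x) n.

Definition hecke_pair (G : group) (H : G -> Prop) : Prop :=
  is_subgroup G H /\ forall x : G, exists n, L_is G H x n.

Definition rel_unimodular (G : group) (H : G -> Prop) : Prop :=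
  forall (g : G) (n m : nat), L_is G H g n -> R_is G H g m -> n = m.

Definition hatS (G : group) (S : list G) (y : G) : Prop :=
  In y S \/ (exists s, In s S /\ y = ginv s) \/ y = gone.

Definition word_prod (G : group) (w : list G) : G :=
  fold_right (fun a b => gmul a b) gone w.

(* S generates (G,H): H\G = ⋃_n H S^^n, i.e. every x lies in H (s_1 ... s_n), s_i ∈ S^ *)
Definition generates (G : group) (H : G -> Prop) (S : list G) : Prop :=
  forall x : G, exists (h : G) (w : list G),
    H h /\ (forall y, In y w -> hatS G S y) /\ x = gmul h (word_prod G w).

Definition length_function (G : group) (H : G -> Prop) (l : G -> R) : Prop :=
  l gone = 0 /\
  (forall g, 0 <= l g) /\
  (forall g, l g = l (ginv g)) /\
  (forall g h, l (gmul g h) <= l g + l h) /\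
  (forall h, H h -> l h = 0).

(* The set {Hx | P x} of right cosets has exactly n elements
   (Hx = Hy iff x y^{-1} ∈ H). *)
Definition coset_count (G : group) (H : G -> Prop) (P : G -> Prop) (n : nat) : Prop :=
  exists f : nat -> G,
    (forall i, (i < n)%nat -> P (f i)) /\
    (forall i j, (i < n)%nat -> (j < n)%nat -> H (gmul (f i) (ginv (f j))) -> i = j) /\
    (forall x, P x -> exists i, (i < n)%nat /\ H (gmul x (ginv (f i)))).

(* Subexponential growth w.r.t. l: the growth function
   G_l(r) = #{Hx : l(x) <= r} is finite for all r and ln G_l(r) / r -> 0. *)
Definition subexp_growth (G : group) (H : G -> Prop) (l : G -> R) : Prop :=
  exists growth : R -> nat,
    (forall r, coset_count G H (fun x => l x <= r) (growth r)) /\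
    is_lim (fun r => ln (INR (growth r)) / r) p_infty 0.

From Stdlib Require Import Reals List Lia Lra ClassicalEpsilon.
From Coquelicot Require Import Coquelicot.

(* Let a_1, ..., a_R be representatives of H / (H ∩ g^-1 H g), with R = R(g).
   For every coset Hx of the ball of radius r the R cosets H g a_j^-1 x lie in
   the ball of radius r + l(g), and the map (Hx, j) |-> H g a_j^-1 x is at most
   L(g)-to-one.  Hence G_l(r) R(g) <= G_l(r + l(g)) L(g), so R(g) > L(g) would
   force G_l(k l(g)) >= (R(g)/L(g))^k, which is exponential growth.  Applying
   this to g and to g^-1 gives L(g) = R(g). *)

Declare Scope group_scope.
Delimit Scope group_scope with g.
Notation "x * y" := (gmul x y) : group_scope.
Notation "x ^-1" := (ginv x) (at level 2, left associativity, format "x ^-1")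
  : group_scope.

Section GroupFacts.
Variable G : group.
Local Open Scope group_scope.
Implicit Types x y z : G.

Lemma mulgA_r x y z : x * y * z = x * (y * z).
Proof. now rewrite gmulA. Qed.

Lemma mulKg x y : x^-1 * (x * y) = y.
Proof. now rewrite gmulA, gmulVl, gmul1l. Qed.

Lemma mulgV x : x * x^-1 = gone.
Proof. now rewrite <- (mulKg (x^-1) (x * x^-1)), (mulKg x (x^-1)), gmulVl. Qed.

Lemma mulg1 x : x * gone = x.
Proof. now rewrite <- (gmulVl G x), gmulA, mulgV, gmul1l. Qed.

Lemma mulKVg x y : x * (x^-1 * y) = y.
Proof. now rewrite gmulA, mulgV, gmul1l. Qed.

Lemma invgK x : x^-1^-1 = x.
Proof. now rewrite <- (mulg1 (x^-1^-1)), <- (gmulVl G x), gmulA, gmulVl, gmul1l. Qed.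

Lemma invg_eq x y : x * y = gone -> x^-1 = y.
Proof. intros E. now rewrite <- (mulg1 (x^-1)), <- E, mulKg. Qed.

Lemma invMg x y : (x * y)^-1 = y^-1 * x^-1.
Proof. apply invg_eq. now rewrite mulgA_r, (gmulA G y), mulgV, gmul1l, mulgV. Qed.

Lemma index_rep_inj (H K : G -> Prop) (n : nat) (f : nat -> G) :
  K gone -> (forall i, (i < n)%nat -> H (f i)) ->
  (forall h, H h -> exists i, (i < n)%nat /\ K ((f i)^-1 * h) /\
     forall j, (j < n)%nat -> K ((f j)^-1 * h) -> j = i) ->
  forall i j, (i < n)%nat -> (j < n)%nat -> K ((f i)^-1 * f j) -> i = j.
Proof.
  intros K1 fH fU i j Hi Hj Kij.
  destruct (fU (f j) (fH j Hj)) as [k [_ [_ Uk]]].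
  rewrite (Uk i Hi Kij). symmetry. apply Uk; [exact Hj|]. now rewrite gmulVl.
Qed.

End GroupFacts.

Ltac gsimpl := repeat rewrite ?mulgA_r, ?invMg, ?invgK, ?gmul1l, ?mulg1,
  ?gmulVl, ?mulgV, ?mulKg, ?mulKVg.
Tactic Notation "gsimpl" "in" hyp(h) := repeat rewrite ?mulgA_r, ?invMg,
  ?invgK, ?gmul1l, ?mulg1, ?gmulVl, ?mulgV, ?mulKg, ?mulKVg in h.

Section Subgroup.
Variables (G : group) (H : G -> Prop).
Hypothesis HS : is_subgroup G H.
Local Open Scope group_scope.

Lemma subgroup_coset_eq (u x y : G) : H (u^-1 * x) -> H (u^-1 * y) -> H (x^-1 * y).
Proof.
  destruct HS as [_ [HM HV]]. intros Hx Hy.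
  pose proof (HM _ _ (HV _ Hx) Hy) as Hxy. now gsimpl in Hxy.
Qed.

Lemma conj_cap_subgroup (x : G) : is_subgroup G (conj_cap G H x).
Proof.
  destruct HS as [H1 [HM HV]]. split; [|split].
  - split; [exact H1|now rewrite gmul1l, gmulVl].
  - intros y z [Hy Hy'] [Hz Hz']. split; [now apply HM|].
    pose proof (HM _ _ Hy' Hz') as Hyz. gsimpl in Hyz. now gsimpl.
  - intros y [Hy Hy']. split; [now apply HV|].
    pose proof (HV _ Hy') as Hy''. gsimpl in Hy''. now gsimpl.
Qed.

End Subgroup.

Lemma NoDup_list_prod {A B : Type} (s : list A) (t : list B) :
  NoDup s -> NoDup t -> NoDup (list_prod s t).
Proof.
  intros Ds Dt. induction Ds as [|x s xs Ds IH]; [constructor|]. simpl.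
  apply NoDup_app; [|exact IH|].
  - apply NoDup_map_NoDup_ForallPairs; [intros y y' _ _ E; now injection E|exact Dt].
  - intros [x' y] Hxy Hs. apply in_map_iff in Hxy as [y' [E _]]. injection E as <- _.
    now apply in_prod_iff in Hs as [].
Qed.

Lemma length_le_of_injective_rel {A B : Type} (s : list A) (t : list B)
  (Rel : A -> B -> Prop) :
  NoDup s ->
  (forall x, In x s -> exists y, In y t /\ Rel x y) ->
  (forall x x' y, In x s -> In x' s -> In y t -> Rel x y -> Rel x' y -> x = x') ->
  (length s <= length t)%nat.
Proof.
  intros Ds Htot Hinj. destruct s as [|x0 s0]; [simpl; lia|].
  destruct (Htot x0 (or_introl eq_refl)) as [y0 _].
  pose (f x := epsilon (inhabits y0) (fun y => In y t /\ Rel x y)).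
  assert (Hf : forall x, In x (x0 :: s0) -> In (f x) t /\ Rel x (f x))
    by (intros x Hx; exact (epsilon_spec _ _ (Htot x Hx))).
  rewrite <- (length_map f). apply NoDup_incl_length.
  - apply NoDup_map_NoDup_ForallPairs; [|exact Ds].
    intros x x' Hx Hx' E. destruct (Hf x Hx) as [Ht Rx], (Hf x' Hx') as [_ Rx'].
    rewrite E in Rx, Ht. exact (Hinj x x' (f x') Hx Hx' Ht Rx Rx').
  - intros y Hy. apply in_map_iff in Hy as [x [<- Hx]]. now apply Hf.
Qed.

Lemma mul_le_of_injective_rel (a m b n : nat) (Rel : nat * nat -> nat * nat -> Prop) :
  (forall i j, (i < a)%nat -> (j < m)%nat ->
     exists t k, (t < b)%nat /\ (k < n)%nat /\ Rel (i, j) (t, k)) ->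
  (forall i j i' j' t k, (i < a)%nat -> (j < m)%nat -> (i' < a)%nat -> (j' < m)%nat ->
     (t < b)%nat -> (k < n)%nat -> Rel (i, j) (t, k) -> Rel (i', j') (t, k) ->
     i = i' /\ j = j') ->
  (a * m <= b * n)%nat.
Proof.
  intros Htot Hinj.
  rewrite <- (length_seq a 0), <- (length_seq m 0), <- (length_seq b 0),
    <- (length_seq n 0), <- !length_prod.
  apply (length_le_of_injective_rel _ _ Rel).
  - apply NoDup_list_prod; apply seq_NoDup.
  - intros [i j] Hij. apply in_prod_iff in Hij as [Hi Hj]. apply in_seq in Hi, Hj.
    destruct (Htot i j) as [t [k [Ht [Hk Rij]]]]; [lia|lia|].
    exists (t, k). split; [|exact Rij]. apply in_prod; apply in_seq; lia.
  - intros [i j] [i' j'] [t k] Hij Hij' Htk R R'.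
    apply in_prod_iff in Hij as [Hi Hj], Hij' as [Hi' Hj'], Htk as [Ht Hk].
    apply in_seq in Hi, Hj, Hi', Hj', Ht, Hk.
    destruct (Hinj i j i' j' t k) as [-> ->]; auto; lia.
Qed.

Section BallCount.
Variables (G : group) (H : G -> Prop) (l : G -> R).
Hypotheses (HS : is_subgroup G H) (Hl : length_function G H l).
Local Open Scope group_scope.

Lemma length_subgroup_mull (h x : G) : H h -> l (h * x) <= l x.
Proof.
  destruct Hl as [_ [_ [_ [lM lH]]]]. intros Hh.
  pose proof (lM h x). rewrite (lH h Hh) in *. lra.
Qed.

Lemma coset_count_shift_bound (g : G) (n m N Nshift : nat) (r : R) :
  L_is G H g n -> R_is G H g m ->
  coset_count G H (fun x => l x <= r) N ->
  coset_count G H (fun x => l x <= r + l g) Nshift ->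
  (N * m <= Nshift * n)%nat.
Proof.
  pose proof HS as [_ [HM HV]].
  intros [b [bH bU]] [a [aH aU]] [f [fP [fD _]]] [c [_ [_ cC]]].
  (* (i, j) is related to (t, k) when H g a_j^-1 f_i = H c_t and k indexes the
     coset of H ∩ g H g^-1 containing u^-1, where u = g a_j^-1 f_i c_t^-1 ∈ H. *)
  pose (u i j t := g * ((a j)^-1 * (f i * (c t)^-1))).
  apply (mul_le_of_injective_rel _ _ _ _ (fun p q =>
    H (u (fst p) (snd p) (fst q)) /\
    conj_cap G H g ((b (snd q))^-1 * (u (fst p) (snd p) (fst q))^-1))).
  - intros i j Hi Hj.
    assert (Hball : l (g * ((a j)^-1 * f i)) <= r + l g).
    { destruct Hl as [_ [_ [_ [lM _]]]].
      pose proof (lM g ((a j)^-1 * f i)).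
      pose proof (length_subgroup_mull _ (f i) (HV _ (aH j Hj))).
      pose proof (fP i Hi). simpl in *. lra. }
    destruct (cC _ Hball) as [t [Ht Hu]]. gsimpl in Hu.
    destruct (bU _ (HV _ Hu)) as [k [Hk [Hbk _]]].
    exists t, k. simpl. auto.
  - (* u u'^-1 lies in g H g^-1, which forces first f_i f_i'^-1 ∈ H, then
       a_j^-1 a_j' ∈ H ∩ g^-1 H g. *)
    intros i j i' j' t k Hi Hj Hi' Hj' _ _ [_ Hbu] [_ Hbu']. simpl in *.
    destruct (subgroup_coset_eq _ _ (conj_cap_subgroup _ _ HS g) _ _ _ Hbu Hbu')
      as [Huu Huu'].
    rewrite invgK in Huu, Huu'.
    assert (E : u i j t * (u i' j' t)^-1 =
                g * ((a j)^-1 * (f i * ((f i')^-1 * (a j' * g^-1))))).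
    { unfold u. now gsimpl. }
    rewrite E in Huu, Huu'. gsimpl in Huu'.
    assert (Ei : i = i').
    { apply fD; [exact Hi|exact Hi'|].
      pose proof (HM _ _ (aH j Hj) (HM _ _ Huu' (HV _ (aH j' Hj')))) as Hff.
      now gsimpl in Hff. }
    subst i'. split; [reflexivity|]. gsimpl in Huu.
    apply (index_rep_inj _ H _ m a (proj1 (conj_cap_subgroup _ _ HS (g^-1))) aH aU);
      [exact Hj|exact Hj'|].
    split; [exact (HM _ _ (HV _ (aH j Hj)) (aH j' Hj'))|]. now gsimpl.
Qed.

End BallCount.

Lemma pow_le_of_shift_bound (N : R -> nat) (c : R) (m n : nat) :
  (forall r, N r * m <= N (r + c)%R * n)%nat ->
  forall k, (N 0%R * m ^ k <= N (INR k * c)%R * n ^ k)%nat.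
Proof.
  intros HN k. induction k as [|k IH].
  - simpl. rewrite Rmult_0_l. lia.
  - rewrite S_INR, Rmult_plus_distr_r, Rmult_1_l, !Nat.pow_succ_r'.
    pose proof (HN (INR k * c)%R). nia.
Qed.

Lemma not_subexp_of_pow_le (N : R -> nat) (c q : R) :
  0 < c -> 1 < q -> (forall k, q ^ k <= INR (N (INR k * c))) ->
  ~ is_lim (fun r => ln (INR (N r)) / r) p_infty 0.
Proof.
  intros Hc Hq Hpow Hlim.
  set (eps := ln q / c).
  assert (Heps : 0 < eps).
  { apply Rdiv_lt_0_compat; [|exact Hc]. rewrite <- ln_1. apply ln_increasing; lra. }
  apply is_lim_spec in Hlim. destruct (Hlim (mkposreal eps Heps)) as [M HM]. simpl in HM.
  destruct (INR_archimed c (Rmax M 0) Hc) as [k Hk].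
  pose proof (Rmax_l M 0). pose proof (Rmax_r M 0).
  specialize (HM (INR k * c) ltac:(lra)).
  assert (Hlog : INR k * ln q <= ln (INR (N (INR k * c)))).
  { rewrite <- ln_pow by lra. apply ln_le; [apply pow_lt; lra|apply Hpow]. }
  assert (eps <= ln (INR (N (INR k * c))) / (INR k * c)).
  { assert (0 < INR k) by (apply (Rmult_lt_reg_r c); lra).
    apply (Rmult_le_reg_r (INR k * c)); [lra|]. unfold eps.
    replace (ln q / c * (INR k * c)) with (INR k * ln q) by (field; lra).
    replace (_ / _ * _) with (ln (INR (N (INR k * c)))) by (field; lra).
    exact Hlog. }
  rewrite Rminus_0_r in HM. apply Rabs_def2 in HM. lra.
Qed.

Lemma R_le_L_of_subexp_growth (G : group) (H : G -> Prop) (l : G -> R) (g : G) (n m : nat) :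
  is_subgroup G H -> length_function G H l -> subexp_growth G H l ->
  L_is G H g n -> R_is G H g m -> (m <= n)%nat.
Proof.
  intros HS Hl [N [HN Hlim]] HL HR.
  destruct (Nat.le_gt_cases m n) as [|Hlt]; [assumption|exfalso].
  assert (Hshift : forall r, (N r * m <= N (r + l g)%R * n)%nat)
    by (intros r; exact (coset_count_shift_bound _ _ _ HS Hl g n m _ _ r HL HR (HN _) (HN _))).
  pose proof Hl as [l1 [l0 _]].
  assert (N0 : (0 < N 0%R)%nat).
  { destruct (HN 0%R) as [f [_ [_ C]]].
    destruct (C gone) as [i [Hi _]]; [rewrite l1; lra|lia]. }
  assert (Hn : (0 < n)%nat) by (pose proof (Hshift 0%R); nia).
  destruct (l0 g) as [Hc|Hc].
  2:{ pose proof (Hshift 0%R) as H0. rewrite <- Hc, Rplus_0_r in H0. nia. }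
  apply (not_subexp_of_pow_le N (l g) (INR m / INR n)); [exact Hc| |intros k|exact Hlim].
  - apply lt_INR in Hlt, Hn. simpl in Hn. apply Rlt_div_r; lra.
  - pose proof (le_INR _ _ (pow_le_of_shift_bound N (l g) m n Hshift k)) as Hk.
    rewrite !mult_INR, !pow_INR in Hk. apply le_INR in N0. apply lt_INR in Hn.
    simpl in N0, Hn. pose proof (pow_le (INR m) k (pos_INR m)).
    unfold Rdiv. rewrite Rpow_mult_distr, pow_inv.
    apply (Rmult_le_reg_r (INR n ^ k)); [apply pow_lt; lra|].
    rewrite Rmult_assoc, Rinv_l by (apply pow_nonzero; lra).
    nra.
Qed.

Theorem proposition4p6 (G : group) (H : G -> Prop) (S : list G) (l : G -> R) :
  hecke_pair G H ->
  generates G H S ->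
  length_function G H l ->
  subexp_growth G H l ->
  rel_unimodular G H.
Proof.
  intros [HS _] _ Hl Hg g n m HL HR.
  apply Nat.le_antisymm.
  - apply (R_le_L_of_subexp_growth G H l (ginv g) m n HS Hl Hg HR).
    unfold R_is. now rewrite invgK.
  - exact (R_le_L_of_subexp_growth G H l g n m HS Hl Hg HL HR).
Qed.
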